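(* Let $G$ be a smallest counterexample to the statement ''every $n$-vertex triangulation has an independent dominating set of size at most $n/3$'' (i.e., $G$ is a triangulation on $n$ vertices with no independent dominating set of size at most $n/3$, and every triangulation with fewer vertices has an independent dominating set of size at most one third of its number of vertices). Let $\psi$ be a partial proper $4$-coloring of $G$ such that every uncolored vertex has degree exactly four, $|\psi[v]|\ge 3$ for every vertex $v$, and $|\psi[v]|=4$ for every vertex $v$ of degree at most five, and let $\overline{C}$ be the set of uncolored vertices. Then the bad subgraph $G_B$ of $G$ has a vertex cover of size at most $|\overline{C}|$.
   Context: Graphs are finite, undirected and simple. A triangulation is a planar graph embedded in the plane such that every face, including the outer face, is bounded by a cycle on three edges. A set $S\subseteq V(G)$ is an independent dominating set if no two vertices of $S$ are adjacent and every vertex not in $S$ has a neighbor in $S$. A partial proper $4$-coloring assigns to some vertices colors from $\{1,2,3,4\}$ with adjacent colored vertices receiving distinct colors. $\psi[v]$ is the set of colors used by $\psi$ on the closed neighborhood $N[v]$. For $i\in\{1,2,3,4\}$, $C_i$ is the set of vertices of color $i$, and $U_i$ is the set of vertices of $G$ not in $C_i$ and having no neighbor in $C_i$. A bad edge is an edge of $G$ between $U_i$ and $U_j$ for some $i\neq j$; letting $E_B$ be the set of bad edges and $V_B$ the set of their endpoints, the bad subgraph is $G_B=(V_B,E_B)$. A vertex cover of $G_B$ is a set of vertices meeting every edge of $G_B$. *)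

From mathcomp Require Import all_boot all_fingroup.
Set Implicit Arguments. Unset Strict Implicit. Unset Printing Implicit Defensive.

Section Graphs.
Variable T : finType.
Variable e : rel T.

Definition simple_graph : Prop := symmetric e /\ irreflexive e.

Definition dart (d : T * T) : bool := e d.1 d.2.
Definition darts : {set T * T} := [set d | dart d].

(* Combinatorial (rotation-system) embedding.  rot sends a dart (x,y) to the
   next dart (x,y') around x; the face successor of (x,y) is rot (y,x). *)
Definition face_succ (rot : {perm T * T}) (d : T * T) : T * T := rot (d.2, d.1).

Definition is_rotation (rot : {perm T * T}) : Prop :=
  (forall d, dart d -> dart (rot d) /\ (rot d).1 = d.1) /\
  (forall x y z, e x y -> e x z -> exists k, iter k rot (x, y) = (x, z)).

Definition faces (rot : {perm T * T}) : {set {set T * T}} :=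
  [set [set d' | fconnect (face_succ rot) d d'] | d in darts].

Definition connected_graph : Prop := forall x y : T, connect e x y.

(* plane embedding: connected rotation system satisfying Euler's formula
   V - E + F = 2  (here written  2V + 2F = #darts + 4, with #darts = 2E) *)
Definition plane_embedding (rot : {perm T * T}) : Prop :=
  is_rotation rot /\ connected_graph /\
  2 * #|T| + 2 * #|faces rot| = #|darts| + 4.

(* triangulation: a simple plane graph every face of which (including the
   outer one) is bounded by a cycle on three edges, i.e. has 3 darts *)
Definition triangulation : Prop :=
  simple_graph /\
  exists rot : {perm T * T}, plane_embedding rot /\
    forall f, f \in faces rot -> #|f| = 3.

Definition independent (S : {set T}) : bool :=
  [forall x in S, forall y in S, ~~ e x y].
Definition dominating (S : {set T}) : bool :=
  [forall x, (x \notin S) ==> [exists y in S, e x y]].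
Definition independent_dominating (S : {set T}) : bool :=
  independent S && dominating S.

Definition has_small_ids : Prop :=
  exists S : {set T}, independent_dominating S /\ 3 * #|S| <= #|T|.

Definition deg (v : T) : nat := #|[set u | e v u]|.

(* partial colourings: None = uncoloured *)
Definition proper_partial_4col (psi : T -> option 'I_4) : Prop :=
  forall x y, e x y -> psi x <> None -> psi x <> psi y.

Definition closed_colors (psi : T -> option 'I_4) (v : T) : {set 'I_4} :=
  [set c | [exists u, ((u == v) || e v u) && (psi u == Some c)]].

Definition color_class (psi : T -> option 'I_4) (i : 'I_4) : {set T} :=
  [set v | psi v == Some i].

Definition U_set (psi : T -> option 'I_4) (i : 'I_4) : {set T} :=
  [set v | (v \notin color_class psi i) &&
           ~~ [exists u in color_class psi i, e v u]].

Definition uncolored (psi : T -> option 'I_4) : {set T} := [set v | psi v == None].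

Definition bad_edge (psi : T -> option 'I_4) (x y : T) : bool :=
  e x y && [exists i, exists j, (i != j) && (x \in U_set psi i) && (y \in U_set psi j)].

Definition bad_vertices (psi : T -> option 'I_4) : {set T} :=
  [set x | [exists y, bad_edge psi x y || bad_edge psi y x]].

Definition bad_vertex_cover (psi : T -> option 'I_4) (X : {set T}) : Prop :=
  X \subset bad_vertices psi /\
  forall x y, bad_edge psi x y -> x \in X \/ y \in X.

End Graphs.

Definition smallest_counterexample (T : finType) (e : rel T) : Prop :=
  triangulation e /\ ~ has_small_ids e /\
  forall (T' : finType) (e' : rel T'), #|T'| < #|T| -> triangulation e' -> has_small_ids e'.

(* Let xy be a bad edge with x in U_i and y in U_j.  A vertex missing a colour in
   its closed neighbourhood has degree at least 6, so x and y are coloured, say a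
   and b, and a, b, i, j are the four colours.  A coloured common neighbour of x
   and y would need a fifth colour, so the apexes of the two triangular faces on
   xy are uncoloured.  The bipartition {a, i} | {b, j} of the colours says that
   exactly one of x, y is coloured 0 or misses 0, so the bad subgraph is
   bipartite, and by Konig's theorem it has a vertex cover of the size of a
   matching M.  Every edge of M has two uncoloured common neighbours, while an
   uncoloured vertex has degree 4 and is thus a common neighbour of at most two
   edges of M; double counting gives |M| <= |uncoloured vertices|. *)

From mathcomp Require Import all_boot all_fingroup.
From mathcomp Require Import zify.
Set Implicit Arguments. Unset Strict Implicit. Unset Printing Implicit Defensive.

Lemma cardsUD (T : finType) (A B : {set T}) : #|A :|: B| = #|A| + #|B :\: A|.
Proof.
by rewrite cardsU cardsD [B :&: A]setIC; have := subset_leq_card (subsetIr A B); lia.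
Qed.

Lemma card_set_in_sum (T : finType) (A : {set T}) (Q : pred T) :
  #|[set x in A | Q x]| = \sum_(x in A) Q x.
Proof.
rewrite -sum1_card [LHS]big_mkcond [RHS]big_mkcond /=.
by apply: eq_bigr => x _; rewrite !inE; case: (x \in A); case: (Q x).
Qed.

Lemma inj_in_setU (T U : finType) (f : T -> U) (A B : {set T}) :
  {in A &, injective f} -> {in B &, injective f} -> [disjoint f @: A & f @: B] ->
  {in A :|: B &, injective f}.
Proof.
move=> injA injB dAB x y; rewrite !in_setU => /orP[xA|xB] /orP[yA|yB] fxy;
  [exact: injA | | | exact: injB].
- by have := disjointFr dAB (imset_f f xA); rewrite fxy imset_f.
- by have := disjointFr dAB (imset_f f yA); rewrite -fxy imset_f.
Qed.

Section Matchings.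
Variables L R : finType.
Implicit Types (E : L -> R -> bool) (A B : {set L}) (Y : {set R}) (M : {set L * R}).

Definition nbh E A : {set R} := [set y | [exists x in A, E x y]].

Definition matching E M : Prop :=
  [/\ {in M, forall m, E m.1 m.2}, {in M &, injective fst} & {in M &, injective snd}].

Lemma nbhP E A y : reflect (exists2 x, x \in A & E x y) (y \in nbh E A).
Proof. by rewrite inE; apply: (iffP exists_inP). Qed.

Lemma nbhU E A B : nbh E (A :|: B) = nbh E A :|: nbh E B.
Proof.
apply/setP=> y; rewrite in_setU; apply/nbhP/orP => [[x]|].
  by rewrite inE => /orP[xA|xB] Exy; [left | right]; apply/nbhP; exists x.
by case=> /nbhP[x xA Exy]; exists x; rewrite // inE xA ?orbT.
Qed.

Lemma nbhS E A B : A \subset B -> nbh E A \subset nbh E B.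
Proof.
move=> sAB; apply/subsetP=> y /nbhP[x xA Exy].
by apply/nbhP; exists x; rewrite ?(subsetP sAB).
Qed.

Lemma nbh_restrict E Y A : nbh (fun x y => E x y && (y \in Y)) A = nbh E A :&: Y.
Proof.
apply/setP=> y; rewrite in_setI; apply/nbhP/andP => [[x xA /andP[Exy yY]]|].
  by split=> //; apply/nbhP; exists x.
by case=> /nbhP[x xA Exy] yY; exists x; rewrite ?Exy.
Qed.

Lemma matching0 E : matching E set0.
Proof. by split=> m; rewrite inE. Qed.

Lemma matching1 E x y : E x y -> matching E [set (x, y)].
Proof. by move=> Exy; split=> [m|m1 m2|m1 m2]; rewrite !inE => /eqP-> // /eqP->. Qed.

Lemma matching_restrict E Y M :
  matching (fun x y => E x y && (y \in Y)) M -> matching E M /\ snd @: M \subset Y.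
Proof.
case=> EM fstM sndM; split; first by split=> // m /EM /andP[].
by apply/subsetP=> _ /imsetP[m /EM /andP[_ yY] ->].
Qed.

Lemma matching_nbh E M : matching E M -> snd @: M \subset nbh E (fst @: M).
Proof.
case=> EM _ _; apply/subsetP=> _ /imsetP[m mM ->].
by apply/nbhP; exists m.1; [apply: imset_f | apply: EM].
Qed.

Lemma card_matching_fst E M : matching E M -> #|fst @: M| = #|M|.
Proof. by case=> _ fstM _; apply: card_in_imset. Qed.

Lemma card_matching_snd E M : matching E M -> #|snd @: M| = #|M|.
Proof. by case=> _ _ sndM; apply: card_in_imset. Qed.

Lemma matchingU E M1 M2 :
  matching E M1 -> matching E M2 ->
  [disjoint fst @: M1 & fst @: M2] -> [disjoint snd @: M1 & snd @: M2] ->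
  matching E (M1 :|: M2).
Proof.
case=> E1 fst1 snd1 [E2 fst2 snd2] dfst dsnd; split; last 2 first.
- exact: inj_in_setU.
- exact: inj_in_setU.
by move=> m; rewrite in_setU => /orP[/E1 | /E2].
Qed.

End Matchings.

Lemma matching_swap (L R : finType) (E' : R -> L -> bool) (M' : {set R * L}) :
  matching E' M' -> matching (fun x y => E' y x) [set (m.2, m.1) | m in M'].
Proof.
case=> EM fstM sndM; split.
- by move=> _ /imsetP[m mM ->]; apply: EM.
- move=> _ _ /imsetP[m1 m1M ->] /imsetP[m2 m2M ->] /= eq12.
  by rewrite (sndM m1 m2).
- move=> _ _ /imsetP[m1 m1M ->] /imsetP[m2 m2M ->] /= eq12.
  by rewrite (fstM m1 m2).
Qed.

Section Hall.
Variables L R : finType.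
Implicit Types (E : L -> R -> bool) (S A B : {set L}).

Definition hall_condition E S := forall A, A \subset S -> #|A| <= #|nbh E A|.

Section InductionStep.
Variables (E : L -> R -> bool) (S : {set L}).
Hypothesis hallS : hall_condition E S.
Hypothesis hall_smaller : forall E' S', #|S'| < #|S| -> hall_condition E' S' ->
  exists2 M, matching E' M & fst @: M = S'.

Lemma hall_tight A :
  A \subset S -> A != set0 -> A != S -> #|nbh E A| <= #|A| ->
  exists2 M, matching E M & fst @: M = S.
Proof.
move=> sAS nA0 nAS tightA.
have [M1 mM1 fM1] : exists2 M, matching E M & fst @: M = A.
  apply: hall_smaller; first by rewrite proper_card // properEneq nAS.
  by move=> B sBA; apply: hallS (subset_trans sBA sAS).
have [M2 mM2 fM2] :
    exists2 M, matching (fun x y => E x y && (y \in ~: nbh E A)) M & fst @: M = S :\: A.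
  apply: hall_smaller.
    by rewrite cardsDS // -subn_gt0 subKn ?subset_leq_card // card_gt0.
  move=> B sB; rewrite nbh_restrict -setDE.
  have dBA : B :\: A = B.
    by apply/setDidPl; rewrite disjoints_subset (subset_trans sB) // setDE subsetIr.
  have sBS : B \subset S by rewrite (subset_trans sB) ?subsetDl.
  have := hallS (A := A :|: B); rewrite subUset sAS sBS nbhU !cardsUD dBA => /(_ isT).
  by move: tightA; lia.
have [{}mM2 sM2] := matching_restrict mM2.
exists (M1 :|: M2); last by rewrite imsetU fM1 fM2 -[RHS](setID S A) (setIidPr sAS).
apply: matchingU => //.
  by rewrite fM1 fM2 disjoint_sym disjoints_subset setDE subsetIr.
rewrite disjoint_sym disjoints_subset (subset_trans sM2) // setCS -fM1.
exact: matching_nbh.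
Qed.

Lemma hall_surplus :
  (forall A, A \subset S -> A != set0 -> A != S -> #|A| < #|nbh E A|) ->
  exists2 M, matching E M & fst @: M = S.
Proof.
move=> surplus.
have [->|[x xS]] := set_0Vmem S; first by exists set0; [exact: matching0 | rewrite imset0].
have [y Exy] : exists y, E x y.
  have := hallS (A := [set x]); rewrite sub1set xS cards1 => /(_ isT).
  by rewrite card_gt0 => /set0Pn[y /nbhP[_ /set1P-> Exy]]; exists y.
have [M2 mM2 fM2] :
    exists2 M, matching (fun u v => E u v && (v \in [set~ y])) M & fst @: M = S :\ x.
  apply: hall_smaller; first by rewrite (cardsD1 x S) xS.
  move=> B sB; rewrite nbh_restrict -setDE.
  have [->|nB0] := eqVneq B set0; first by rewrite cards0.
  have sBS : B \subset S by rewrite (subset_trans sB) ?subsetDl.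
  have nBS : B != S.
    by apply: contraTneq sB => ->; apply/subsetPn; exists x; rewrite // !inE eqxx.
  by have := surplus B sBS nB0 nBS; rewrite (cardsD1 y (nbh E B)); case: (y \in _); lia.
have [{}mM2 sM2] := matching_restrict mM2.
exists ([set (x, y)] :|: M2); last by rewrite imsetU imset_set1 fM2 setD1K.
apply: matchingU => //.
- exact: matching1.
- by rewrite imset_set1 disjoints1 fM2 !inE eqxx.
- rewrite imset_set1 disjoints1 /=.
  by apply/negP => /(subsetP sM2); rewrite !inE eqxx.
Qed.

End InductionStep.

Theorem hall E S : hall_condition E S -> exists2 M, matching E M & fst @: M = S.
Proof.
have [n ltSn] := ubnP #|S|; elim: n E S ltSn => // n IH E S ltSn hallS.
have smaller E' S' : #|S'| < #|S| -> hall_condition E' S' ->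
    exists2 M, matching E' M & fst @: M = S'.
  by move=> ltS'S; apply: IH; rewrite (leq_trans ltS'S).
have [tight|] :=
  boolP [exists A : {set L}, [&& A \subset S, A != set0, A != S & #|nbh E A| <= #|A|]].
  by have /existsP[A /and4P[sAS nA0 nAS tightA]] := tight; exact: hall_tight tightA.
rewrite negb_exists => /forallP loose; apply: hall_surplus => // A sAS nA0 nAS.
by have := loose A; rewrite sAS nA0 nAS /= -ltnNge.
Qed.

End Hall.

Lemma imset_fst_swap (L R : finType) (M : {set R * L}) :
  fst @: [set (m.2, m.1) | m in M] = snd @: M.
Proof. by rewrite -imset_comp; apply: eq_imset. Qed.

Lemma imset_snd_swap (L R : finType) (M : {set R * L}) :
  snd @: [set (m.2, m.1) | m in M] = fst @: M.
Proof. by rewrite -imset_comp; apply: eq_imset. Qed.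

Section Konig.
Variables (L R : finType) (E : L -> R -> bool).

(* #|L| + #|R| minus the size of the vertex cover (~: A, nbh E A); every
   minimal vertex cover has this form. *)
Definition cover_slack (A : {set L}) := #|A| + #|~: nbh E A|.

Section MaximalSlack.
Variable A : {set L}.
Hypothesis maxA : forall B, cover_slack B <= cover_slack A.

Lemma hall_outside : hall_condition (fun x y => E x y && (y \in ~: nbh E A)) (~: A).
Proof.
move=> B sB; rewrite nbh_restrict.
have dBA : B :\: A = B by apply/setDidPl; rewrite disjoints_subset.
have := maxA (A :|: B); rewrite /cover_slack nbhU setCU cardsUD dBA.
by rewrite -(cardsID (nbh E B) (~: nbh E A)) setDE [nbh E B :&: _]setIC; lia.
Qed.

Lemma hall_inside : hall_condition (fun y x => E x y && (x \in A)) (nbh E A).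
Proof.
move=> C sC; set NC := nbh _ C.
have sNC : NC \subset A by apply/subsetP=> x /nbhP[y _ /andP[]].
have dNC : [disjoint C & nbh E (A :\: NC)].
  rewrite disjoint_sym disjoints_subset; apply/subsetP=> y /nbhP[x].
  rewrite in_setD in_setC => /andP[xNC xA] Exy; apply: contra xNC => yC.
  by apply/nbhP; exists y; rewrite ?Exy.
have sCN : nbh E (A :\: NC) :|: C \subset nbh E A by rewrite subUset sC nbhS ?subsetDl.
have := maxA (A :\: NC); rewrite /cover_slack cardsDS //.
have := subset_leq_card sCN; rewrite cardsUD (setDidPl dNC).
have := cardsC (nbh E A); have := cardsC (nbh E (A :\: NC)); have := subset_leq_card sNC.
lia.
Qed.

End MaximalSlack.

Theorem konig : exists (CL : {set L}) (CR : {set R}) (M : {set L * R}),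
  [/\ forall x y, E x y -> (x \in CL) || (y \in CR), matching E M & #|CL| + #|CR| = #|M|].
Proof.
have [A _ maxA] := @arg_maxnP _ set0 xpredT cover_slack isT.
have [M1 mM1 fM1] := hall (hall_outside (fun B => maxA B isT)).
have [M2 mM2 fM2] := hall (hall_inside (fun B => maxA B isT)).
have [{}mM1 sM1] := matching_restrict mM1.
have [{}mM2 sM2] := matching_restrict (E := fun y x => E x y) mM2.
set M := M1 :|: [set (m.2, m.1) | m in M2].
have mM : matching E M.
  apply: matchingU => //; rewrite ?imset_fst_swap ?imset_snd_swap.
  - exact: matching_swap.
  - by rewrite fM1 disjoint_sym disjoints_subset setCK.
  - by rewrite fM2 disjoints_subset.
exists (~: A), (nbh E A), M; split=> //.
  by move=> x y Exy; rewrite inE; case: (boolP (x \in A)) => //= xA; apply/nbhP; exists x.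
rewrite -(card_matching_fst mM) imsetU fM1 imset_fst_swap cardsUD.
rewrite (setDidPl _) ?disjoints_subset ?setCK // (card_matching_snd mM2).
by rewrite -fM2 (card_matching_fst mM2).
Qed.

End Konig.

Section Triangulation.
Variables (T : finType) (e : rel T) (rot : {perm T * T}).
Hypotheses (esym : symmetric e) (rot_e : is_rotation e rot)
  (faces3 : forall f, f \in faces e rot -> #|f| = 3).

Lemma rot_dart x y : e x y -> exists2 z, rot (x, y) = (x, z) & e x z.
Proof.
move=> exy; have [ez rx] := rot_e.1 (x, y) exy.
by exists (rot (x, y)).2; [rewrite [LHS]surjective_pairing rx | move: ez; rewrite /dart rx].
Qed.

Lemma rot_triangle x y : e x y ->
  exists z, [/\ rot (y, x) = (y, z), rot (x, z) = (x, y), e y z & e z x].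
Proof.
move=> exy.
have face_inj : injective (face_succ rot).
  by move=> [a b] [c d]; rewrite /face_succ => /perm_inj[-> ->].
have : fingraph.order (face_succ rot) (x, y) = 3.
  rewrite -(faces3 (f := [set d | fconnect (face_succ rot) (x, y) d])).
    by rewrite /fingraph.order; apply: eq_card => d; rewrite !inE.
  by apply/imsetP; exists (x, y); rewrite ?inE.
move=> ord3; have := iter_order face_inj (x, y); rewrite ord3 /= => it3.
have [z ryx eyz] := rot_dart (y := x) (x := y) ltac:(by rewrite esym).
have [t rzy ezt] := rot_dart (y := y) (x := z) ltac:(by rewrite esym).
move: it3; rewrite /face_succ /= ryx rzy /= => rtz.
have [t' rtz' _] := rot_dart (y := z) (x := t) ltac:(by rewrite esym).
move: rtz; rewrite rtz' => -[tx t'y]; subst t t'.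
by exists z.
Qed.

Lemma two_common_neighbours x y : e x y -> 2 < deg e y ->
  exists z z', [/\ z != z', e x z, e y z, e x z' & e y z'].
Proof.
move=> exy dy.
have [z [ryx _ eyz ezx]] := rot_triangle exy.
have [z' [_ ryz' exz' ez'y]] := rot_triangle (x := y) (y := x) ltac:(by rewrite esym).
exists z, z'; split; rewrite // 1?esym //.
apply/eqP=> zz'; subst z'.
have orbit_yx k : iter k rot (y, x) \in [set (y, x); (y, z)].
  elim: k => [|k IH]; first by rewrite !inE eqxx.
  by rewrite iterS; case/set2P: IH => ->; rewrite ?ryx ?ryz' !inE eqxx ?orbT.
have : [set u | e y u] \subset [set x; z].
  apply/subsetP=> u; rewrite inE => eyu.
  have [k rk] := rot_e.2 y x u ltac:(by rewrite esym) eyu.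
  by have := orbit_yx k; rewrite rk !inE !xpair_eqE eqxx.
move/subset_leq_card; move: dy; rewrite /deg cards2; case: (x != z); lia.
Qed.

End Triangulation.

Lemma matching_le_common_neighbours (T : finType) (e : rel T) (U : {set T}) (M : {set T * T}) :
  symmetric e -> {in M &, injective fst} -> {in M &, injective snd} ->
  [disjoint fst @: M & snd @: M] -> {in U, forall w, deg e w <= 4} ->
  {in M, forall m, 2 <= #|[set w in U | e m.1 w && e m.2 w]|} ->
  #|M| <= #|U|.
Proof.
move=> esym fstM sndM dM degU commonM.
pose P m w := e m.1 w && e m.2 w.
have per_vertex w : w \in U -> #|[set m in M | P m w]| <= 2.
  move=> wU; set Mw := [set m in M | P m w].
  have sMw : Mw \subset M by apply/subsetP=> m; rewrite inE => /andP[].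
  have cfst : #|fst @: Mw| = #|Mw|.
    by apply: card_in_imset => m1 m2 /(subsetP sMw) ? /(subsetP sMw) ?; apply: fstM.
  have csnd : #|snd @: Mw| = #|Mw|.
    by apply: card_in_imset => m1 m2 /(subsetP sMw) ? /(subsetP sMw) ?; apply: sndM.
  have dMw : [disjoint snd @: Mw & fst @: Mw].
    by rewrite disjoint_sym (disjointWl (imsetS _ sMw)) // (disjointWr (imsetS _ sMw)).
  have sNw : fst @: Mw :|: snd @: Mw \subset [set u | e w u].
    apply/subsetP=> u; rewrite in_setU inE => /orP[] /imsetP[m];
      by rewrite inE => /andP[_ /andP[e1 e2]] ->; rewrite esym.
  have := subset_leq_card sNw; rewrite cardsUD (setDidPl dMw) cfst csnd.
  by have := degU w wU; rewrite /deg; lia.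
have : \sum_(m in M) 2 <= \sum_(w in U) 2.
  apply: (@leq_trans (\sum_(m in M) #|[set w in U | P m w]|)); first exact: leq_sum.
  under eq_bigr do rewrite card_set_in_sum.
  rewrite exchange_big /=; apply: leq_sum => w wU.
  by rewrite -card_set_in_sum; apply: per_vertex.
by rewrite !sum_nat_const; lia.
Qed.

Lemma uniq4_mem (a b i j c : 'I_4) : uniq [:: a; b; i; j] -> c \in [:: a; b; i; j].
Proof.
move/card_uniqP=> card4; have /subset_cardP : #|[:: a; b; i; j]| = #|'I_4|.
  by rewrite card4 card_ord.
by move=> /(_ (subset_predT _)) ->.
Qed.

Lemma uniq4_side0 (a b i j : 'I_4) : uniq [:: a; b; i; j] ->
  ((a == ord0) || (i == ord0)) != ((b == ord0) || (j == ord0)).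
Proof.
move=> uniq4; have := count_uniq_mem ord0 uniq4; rewrite uniq4_mem //= addn0.
by case: (a == ord0); case: (b == ord0); case: (i == ord0); case: (j == ord0).
Qed.

Section Colouring.
Variables (T : finType) (e : rel T) (psi : T -> option 'I_4).
Hypotheses (esym : symmetric e) (psi_proper : proper_partial_4col e psi)
  (uncolored_deg : forall v, psi v = None -> deg e v = 4)
  (closed_colors_ge3 : forall v, 3 <= #|closed_colors e psi v|)
  (low_deg_full : forall v, deg e v <= 5 -> #|closed_colors e psi v| = 4).

Lemma mem_closed_colors u v c :
  psi u = Some c -> (u == v) || e v u -> c \in closed_colors e psi v.
Proof. by move=> pu uv; rewrite inE; apply/existsP; exists u; rewrite uv pu eqxx. Qed.

Lemma U_set_closed_colors v i : v \in U_set e psi i -> i \notin closed_colors e psi v.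
Proof.
rewrite !inE => /andP[viC /exists_inP viN]; apply/existsP=> -[u /andP[uv /eqP pu]].
case/orP: uv => [/eqP uv | evu]; first by move: viC; rewrite -uv pu eqxx.
by apply: viN; exists u; rewrite ?inE ?pu.
Qed.

Lemma U_set_color_neq u v i c :
  v \in U_set e psi i -> psi u = Some c -> (u == v) || e v u -> c != i.
Proof.
move=> vU pu uv; apply: contraNneq (U_set_closed_colors vU) => <-.
exact: mem_closed_colors pu uv.
Qed.

Lemma U_set_missing v i k :
  v \in U_set e psi i -> k \notin closed_colors e psi v -> k = i.
Proof.
move=> vU vk; apply/eqP; apply: contraTT (closed_colors_ge3 v) => ki.
have : closed_colors e psi v \subset ~: [set i; k].
  apply/subsetP=> c vc; rewrite !inE negb_or.
  by apply/andP; split; apply: contraTneq vc => ->; [apply: U_set_closed_colors vU|].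
move/subset_leq_card; have := cardsC [set i; k].
rewrite cards2 card_ord eq_sym ki /= -leqNgt => /(canRL (addKn 2)) card2 /leq_trans; apply.
by rewrite card2.
Qed.

Lemma U_set_deg v i : v \in U_set e psi i -> 5 < deg e v.
Proof.
move=> vU; rewrite ltnNge; apply/negP=> /low_deg_full full.
have : closed_colors e psi v \subset [set~ i].
  by rewrite -disjoints_subset disjoint_sym disjoints1 U_set_closed_colors.
by move/subset_leq_card; rewrite full cardsC1 card_ord.
Qed.

Lemma U_set_colored v i : v \in U_set e psi i -> exists a, psi v = Some a.
Proof.
move=> vU; case pv: (psi v) => [a|]; first by exists a.
by have := uncolored_deg pv; have := U_set_deg vU; lia.
Qed.

Lemma bad_edge_colors x y : bad_edge e psi x y ->
  exists a b i j, [/\ psi x = Some a, psi y = Some b,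
    x \in U_set e psi i, y \in U_set e psi j & uniq [:: a; b; i; j]].
Proof.
case/andP=> exy /existsP[i /existsP[j /andP[/andP[ij xU] yU]]].
have [a pa] := U_set_colored xU; have [b pb] := U_set_colored yU.
have ab : a != b.
  by apply/eqP=> ab; apply: (psi_proper exy); rewrite pa ?pb ?ab.
have ai : a != i by apply: U_set_color_neq xU pa _; rewrite eqxx.
have aj : a != j by apply: U_set_color_neq yU pa _; rewrite esym exy orbT.
have bi : b != i by apply: U_set_color_neq xU pb _; rewrite exy orbT.
have bj : b != j by apply: U_set_color_neq yU pb _; rewrite eqxx.
by exists a, b, i, j; split; rewrite //= !inE !negb_or ab ai aj bi bj ij.
Qed.

Lemma bad_edge_common_uncolored x y z :
  bad_edge e psi x y -> e x z -> e y z -> psi z = None.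
Proof.
move=> bxy exz eyz; have [a [b [i [j [pa pb xU yU uniq4]]]]] := bad_edge_colors bxy.
case pz: (psi z) => [c|] //.
have neq_nbr u d : e z u -> psi u = Some d -> c != d.
  by move=> ezu pu; apply/eqP=> cd; apply: (psi_proper ezu); rewrite pz ?pu ?cd.
have ca := neq_nbr x a ltac:(by rewrite esym) pa.
have cb := neq_nbr y b ltac:(by rewrite esym) pb.
have ci : c != i by apply: U_set_color_neq xU pz _; rewrite exz orbT.
have cj : c != j by apply: U_set_color_neq yU pz _; rewrite eyz orbT.
by have := uniq4_mem c uniq4; rewrite !inE (negbTE ca) (negbTE cb) (negbTE ci) (negbTE cj).
Qed.

(* A 2-colouring of the bad subgraph (bad_edge_side). *)
Definition side v := (psi v == Some ord0) || (ord0 \notin closed_colors e psi v).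

Lemma side_U_set v i a :
  psi v = Some a -> v \in U_set e psi i -> side v = (a == ord0) || (i == ord0).
Proof.
move=> pv vU; rewrite /side pv /=; congr (_ || _).
apply/idP/eqP=> [/(U_set_missing vU) -> // | <-].
exact: U_set_closed_colors vU.
Qed.

Lemma bad_edge_side x y : bad_edge e psi x y -> side x != side y.
Proof.
move=> bxy; have [a [b [i [j [pa pb xU yU uniq4]]]]] := bad_edge_colors bxy.
by rewrite (side_U_set pa xU) (side_U_set pb yU) uniq4_side0.
Qed.

Lemma bad_edge_sym x y : bad_edge e psi x y -> bad_edge e psi y x.
Proof.
case/andP=> exy /existsP[i /existsP[j /andP[/andP[ij xU] yU]]].
rewrite /bad_edge esym exy; apply/existsP; exists j; apply/existsP; exists i.
by rewrite eq_sym ij xU yU.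
Qed.

Lemma bad_edge_orient x y : bad_edge e psi x y ->
  (side x && bad_edge e psi x y) || (side y && bad_edge e psi y x).
Proof.
move=> bxy; rewrite bxy (bad_edge_sym bxy) !andbT.
by have := bad_edge_side bxy; case: (side x); case: (side y).
Qed.

Lemma bad_edge_vertices x y :
  bad_edge e psi x y -> (x \in bad_vertices e psi) && (y \in bad_vertices e psi).
Proof.
move=> bxy; rewrite !inE; apply/andP.
by split; apply/existsP; [exists y | exists x]; rewrite bxy ?orbT.
Qed.

Lemma bad_edge_uncolored_apexes (rot : {perm T * T}) :
  is_rotation e rot -> (forall f, f \in faces e rot -> #|f| = 3) ->
  forall x y, bad_edge e psi x y -> 2 <= #|[set w in uncolored psi | e x w && e y w]|.
Proof.
move=> rot_e faces3 x y bxy; have [a [b [i [j [_ _ _ yU _]]]]] := bad_edge_colors bxy.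
have [||z [z' [zz' exz eyz exz' eyz']]] :=
  two_common_neighbours esym rot_e faces3 (x := x) (y := y).
- by case/andP: bxy.
- by have := U_set_deg yU; lia.
have apex_uncolored w : e x w -> e y w -> psi w == None.
  by move=> exw eyw; rewrite (bad_edge_common_uncolored bxy exw eyw).
apply: leq_trans (subset_leq_card (_ : [set z; z'] \subset _)); first by rewrite cards2 zz'.
apply/subsetP=> w; rewrite !inE => /orP[] /eqP->;
  by rewrite apex_uncolored ?exz ?eyz ?exz' ?eyz'.
Qed.

End Colouring.

Unset Implicit Arguments.

Theorem lemma3 (T : finType) (e : rel T) (psi : T -> option 'I_4) :
  smallest_counterexample e ->
  proper_partial_4col e psi ->
  (forall v, psi v = None -> deg e v = 4) ->
  (forall v, 3 <= #|closed_colors e psi v|) ->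
  (forall v, deg e v <= 5 -> #|closed_colors e psi v| = 4) ->
  exists X : {set T}, bad_vertex_cover e psi X /\ #|X| <= #|uncolored psi|.
Proof.
move=> [[[esym _] [rot [[rot_e _] faces3]]] _] proper unc4 ge3 full.
have [CL [CR [M [cover [EM fstM sndM] cardM]]]] :=
  konig (fun x y => side e psi x && bad_edge e psi x y).
exists ((CL :|: CR) :&: bad_vertices e psi); split.
  split=> [|x y bxy]; first exact: subsetIr.
  have /andP[xb yb] := bad_edge_vertices bxy.
  rewrite !in_setI !in_setU xb yb !andbT; apply/orP.
  case/orP: (bad_edge_orient esym proper unc4 ge3 full bxy) => /cover/orP[]->;
    by rewrite ?orbT.
apply: leq_trans (subset_leq_card (subsetIl _ _)) _.
apply: leq_trans (leq_card_setU CL CR) _; rewrite cardM.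
apply: matching_le_common_neighbours fstM sndM _ _ _ => //.
- rewrite disjoints_subset; apply/subsetP=> _ /imsetP[m mM ->].
  rewrite in_setC; apply/imsetP=> -[m' m'M m'2].
  have /andP[sm _] := EM m mM; have /andP[sm' bm'] := EM m' m'M.
  by move: (bad_edge_side esym proper unc4 ge3 full bm'); rewrite -m'2 sm sm'.
- by move=> w; rewrite inE => /eqP /unc4 ->.
move=> m /EM /andP[_].
exact: (bad_edge_uncolored_apexes esym proper unc4 full rot_e faces3).
Qed.
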